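(* Let $n>0$ and $c>0$ be constants and fix $x_0$ with $0<x_0<c$. Let $f\in C(\mathbb{R}_0^+\times\mathbb{R}_0^+,\mathbb{R}_0^+)$ be nondecreasing in its first variable for each fixed second variable, let $w\in C(\mathbb{R}_0^+,\mathbb{R}_0^+)$ be nondecreasing with $w(x)>0$ for $x>0$, and let $\alpha\in C^1(\mathbb{R}_0^+,\mathbb{R}_0^+)$ be nondecreasing with $\alpha(t)\le t$. If $u\in C(\mathbb{R}_0^+,\mathbb{R}_0^+)$ satisfies $$u^n(t)\le c+\int_0^{\alpha(t)}f(t,s)\,(u^n(s)+1)\ln(u^n(s)+1)\,w(u(s))\,ds\qquad\text{for all }t\ge0,$$ then there exists $\tau>0$ such that for all $t\in[0,\tau]$, $$\Psi(G(c))+\int_0^{\alpha(t)}f(t,s)\,ds\in\mathrm{Dom}(\Psi^{-1})$$ and $$u(t)\le\Big\{G^{-1}\Big(\Psi^{-1}\Big[\Psi(G(c))+\int_0^{\alpha(t)}f(t,s)\,ds\Big]\Big)\Big\}^{1/n},$$ where $G(x)=\int_{x_0}^x\frac{ds}{(s+1)\ln(s+1)}$ for $x\ge x_0$, whose inverse is $G^{-1}(y)=e^{e^{y}\ln(x_0+1)}-1$, and $\Psi(x)=\int_1^x\frac{ds}{w\big((e^{e^{s}\ln(x_0+1)}-1)^{1/n}\big)}$ for $x>0$.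
   Context: $\mathbb{R}_0^+=[0,\infty)$. $\Psi$ is strictly increasing on $(0,\infty)$, $\Psi^{-1}$ denotes its inverse, and $\mathrm{Dom}(\Psi^{-1})=\Psi((0,\infty))$. *)

From Stdlib Require Import Reals Lra ClassicalEpsilon.
Open Scope R_scope.

(* Total Riemann integral: the value of RiemannInt for any integrability proof
   (all such proofs give the same value, RiemannInt_P5).  Only ever applied to
   integrands continuous on the integration interval, which are integrable. *)
Definition Rint (g : R -> R) (a b : R) : R :=
  epsilon (inhabits 0) (fun I => exists pr : Riemann_integrable g a b, RiemannInt pr = I).

Definition rpow (x a : R) : R :=
  if Rlt_dec 0 x then Rpower x a else 0.

Definition cont_nonneg (g : R -> R) : Prop :=
  forall x, 0 <= x -> forall eps, 0 < eps -> exists delta, 0 < delta /\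
    forall y, 0 <= y -> Rabs (y - x) < delta -> Rabs (g y - g x) < eps.

Definition cont2_nonneg (f : R -> R -> R) : Prop :=
  forall x y, 0 <= x -> 0 <= y -> forall eps, 0 < eps -> exists delta, 0 < delta /\
    forall x' y', 0 <= x' -> 0 <= y' -> Rabs (x' - x) < delta -> Rabs (y' - y) < delta ->
      Rabs (f x' y' - f x y) < eps.

Definition C1_nonneg (g : R -> R) : Prop :=
  exists g' : R -> R, cont_nonneg g' /\
    forall t, 0 <= t -> forall eps, 0 < eps -> exists delta, 0 < delta /\
      forall h, h <> 0 -> 0 <= t + h -> Rabs h < delta ->
        Rabs ((g (t + h) - g t) / h - g' t) < eps.

Definition nondecr_nonneg (g : R -> R) : Prop :=
  forall x y, 0 <= x -> x <= y -> g x <= g y.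

Definition G (x0 x : R) : R := Rint (fun s => 1 / ((s + 1) * ln (s + 1))) x0 x.

Definition Ginv (x0 y : R) : R := exp (exp y * ln (x0 + 1)) - 1.

Definition Psi (x0 n : R) (w : R -> R) (x : R) : R :=
  Rint (fun s => 1 / w (rpow (Ginv x0 s) (1 / n))) 1 x.

Definition Psi_inv (x0 n : R) (w : R -> R) (y : R) : R :=
  epsilon (inhabits 0) (fun x => 0 < x /\ Psi x0 n w x = y).

Definition in_Dom_Psi_inv (x0 n : R) (w : R -> R) (y : R) : Prop :=
  exists x, 0 < x /\ Psi x0 n w x = y.

(* Fix a time T and put k_T(s) = f(T,s) H(u(s)^n), where
   H(x) = (x+1) ln(x+1) w(x^{1/n}), and v(r) = c + int_0^r k_T.  Because f is
   nondecreasing in its first variable and alpha(s) <= s, the hypothesis gives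
   u(s)^n <= v(s) on [0, alpha T] and u(T)^n <= v(alpha T).  The function
   Omega = Psi o G has derivative 1/H, so the classical Bihari comparison
   (a mean value argument on r |-> Omega(v r) - int_0^r f(T,.)) yields
   Omega(v(alpha T)) <= Psi(G c) + int_0^{alpha T} f(T,s) ds.  Inverting the
   strictly increasing maps Psi and G then bounds u(T).  Finally, for T small
   the right-hand side lies between Psi(G c) and Psi(G c + 1), so it belongs to
   the range of Psi (intermediate value theorem): this fixes tau. *)

From Stdlib Require Import Reals Lra ClassicalEpsilon.
Open Scope R_scope.

(* ** The total integral [Rint] *)

Lemma Rint_RiemannInt g a b (pr : Riemann_integrable g a b) : Rint g a b = RiemannInt pr.
Proof.
  unfold Rint.
  destruct (epsilon_spec (inhabits 0) (fun I => exists pr, RiemannInt pr = I)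
    (ex_intro _ (RiemannInt pr) (ex_intro _ pr eq_refl))) as [pr' H].
  rewrite <- H. apply RiemannInt_P5.
Qed.

Definition cont_on (g : R -> R) (a b : R) : Prop :=
  forall x, a <= x <= b -> continuity_pt g x.

Lemma Rint_same g a : Rint g a a = 0.
Proof. rewrite (Rint_RiemannInt _ _ _ (RiemannInt_P7 g a)). apply RiemannInt_P9. Qed.

Lemma continuity_integrable g a b : continuity g -> Riemann_integrable g a b.
Proof.
  intros C. destruct (Rle_dec a b).
  - apply continuity_implies_RiemannInt; auto.
  - apply RiemannInt_P1, continuity_implies_RiemannInt; auto; lra.
Qed.

Lemma Rint_chasles g a m b : continuity g -> Rint g a b = Rint g a m + Rint g m b.
Proof.
  intros C.
  rewrite (Rint_RiemannInt _ _ _ (continuity_integrable g a m C)),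
    (Rint_RiemannInt _ _ _ (continuity_integrable g m b C)),
    (Rint_RiemannInt _ _ _ (continuity_integrable g a b C)).
  symmetry; apply RiemannInt_P26.
Qed.

Lemma Rint_le g h a b : a <= b -> cont_on g a b -> cont_on h a b ->
  (forall x, a <= x <= b -> g x <= h x) -> Rint g a b <= Rint h a b.
Proof.
  intros hab Cg Ch H.
  assert (pg : Riemann_integrable g a b) by (apply continuity_implies_RiemannInt; auto).
  assert (ph : Riemann_integrable h a b) by (apply continuity_implies_RiemannInt; auto).
  rewrite (Rint_RiemannInt _ _ _ pg), (Rint_RiemannInt _ _ _ ph).
  apply RiemannInt_P19; auto. intros; apply H; lra.
Qed.

Lemma Rint_ext g h a b : a <= b -> cont_on g a b ->
  (forall x, a <= x <= b -> g x = h x) -> Rint g a b = Rint h a b.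
Proof.
  intros hab C H.
  assert (pg : Riemann_integrable g a b) by (apply continuity_implies_RiemannInt; auto).
  assert (ph : Riemann_integrable h a b).
  { apply Riemann_integrable_ext with g; auto.
    rewrite Rmin_left, Rmax_right; auto. }
  rewrite (Rint_RiemannInt _ _ _ pg), (Rint_RiemannInt _ _ _ ph).
  apply RiemannInt_P18; auto. intros; apply H; lra.
Qed.

Lemma Rint_nonneg g a b : a <= b -> cont_on g a b ->
  (forall x, a <= x <= b -> 0 <= g x) -> 0 <= Rint g a b.
Proof.
  intros hab C H.
  replace 0 with (Rint (fct_cte 0) a b).
  - apply Rint_le; auto. intros x _; apply continuity_pt_const; intros ? ?; auto.
  - rewrite (Rint_RiemannInt _ _ _ (RiemannInt_P14 a b 0)), RiemannInt_P15. ring.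
Qed.

Lemma Rint_primitive g a b : a <= b -> cont_on g a b ->
  exists P, (forall x, a <= x <= b -> derivable_pt_lim P x (g x)) /\
            (forall x, a <= x <= b -> P x = Rint g a x).
Proof.
  intros h C.
  exists (primitive h (FTC_P1 h C)). split.
  - intros x hx; apply RiemannInt_P28; auto.
  - intros x [h1 h2]. unfold primitive.
    destruct (Rle_dec a x); [|lra]. destruct (Rle_dec x b); [|lra].
    symmetry; apply Rint_RiemannInt.
Qed.

Lemma Rint_FTC g F a b : a <= b -> cont_on g a b ->
  (forall x, a <= x <= b -> derivable_pt_lim F x (g x)) -> Rint g a b = F b - F a.
Proof.
  intros h C D.
  destruct (Rint_primitive g a b h C) as [P [DP EP]].
  destruct h as [h|h]; [|subst; rewrite Rint_same; ring].
  destruct (MVT_cor2 (fun x => F x - P x) (fun x => g x - g x) a b h) as [z [Hz _]].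
  - intros z hz. apply derivable_pt_lim_minus; auto.
  - rewrite <- (EP b), (EP a) in * by lra. rewrite Rint_same in Hz.
    replace (g z - g z) with 0 in Hz by ring. lra.
Qed.

Lemma Rint_deriv g a y0 : continuity g ->
  derivable_pt_lim (fun y => Rint g a y) y0 (g y0).
Proof.
  intros C.
  set (lo := Rmin a y0 - 1). set (hi := Rmax a y0 + 1).
  pose proof (Rmin_l a y0); pose proof (Rmin_r a y0).
  pose proof (Rmax_l a y0); pose proof (Rmax_r a y0).
  destruct (Rint_primitive g lo hi ltac:(unfold lo, hi; lra) (fun x _ => C x))
    as [P [DP EP]].
  apply derivable_pt_lim_locally_ext with (f := fun y => P y - P a) (a := lo) (b := hi).
  - unfold lo, hi; lra.
  - intros z hz. rewrite !EP by (unfold lo, hi in *; lra).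
    rewrite (Rint_chasles g lo a z C). ring.
  - replace (g y0) with (g y0 - 0) by ring.
    apply (derivable_pt_lim_minus P (fun _ => P a)).
    + apply DP. unfold lo, hi; lra.
    + apply derivable_pt_lim_const.
Qed.

Lemma continuity_pt_of_eps g x : (forall eps, 0 < eps -> exists d, 0 < d /\
   forall y, Rabs (y - x) < d -> Rabs (g y - g x) < eps) -> continuity_pt g x.
Proof.
  intros H. unfold continuity_pt, continue_in, limit1_in, limit_in; simpl; unfold R_dist.
  intros eps he. destruct (H eps he) as [d [hd Hd]]. exists d; split; auto.
  intros y [_ hy]; auto.
Qed.

Lemma eps_of_continuity_pt g x : continuity_pt g x -> forall eps, 0 < eps ->
  exists d, 0 < d /\ forall y, Rabs (y - x) < d -> Rabs (g y - g x) < eps.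
Proof.
  unfold continuity_pt, continue_in, limit1_in, limit_in; simpl; unfold R_dist.
  intros H eps he. destruct (H eps he) as [d [hd Hd]]. exists d; split; auto.
  intros y hy. destruct (Req_dec x y) as [<-|hne].
  - rewrite Rminus_diag, Rabs_R0; auto.
  - apply Hd. repeat split; auto.
Qed.

Definition ext0 (g : R -> R) (y : R) : R := g (Rmax 0 y).

Lemma Rmax0_lipschitz x y : Rabs (Rmax 0 y - Rmax 0 x) <= Rabs (y - x).
Proof.
  unfold Rmax; destruct (Rle_dec 0 y), (Rle_dec 0 x); unfold Rabs;
  repeat destruct Rcase_abs; lra.
Qed.

Lemma ext0_continuity g : cont_nonneg g -> continuity (ext0 g).
Proof.
  intros C x. apply continuity_pt_of_eps. intros eps he.
  destruct (C _ (Rmax_l 0 x) eps he) as [d [hd Hd]]. exists d; split; auto.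
  intros y hy. apply Hd; [apply Rmax_l|].
  eapply Rle_lt_trans; [apply Rmax0_lipschitz|]; auto.
Qed.

Lemma ext0_continuity2 f t : cont2_nonneg f -> 0 <= t -> continuity (ext0 (f t)).
Proof.
  intros C ht x. apply continuity_pt_of_eps. intros eps he.
  destruct (C _ _ ht (Rmax_l 0 x) eps he) as [d [hd Hd]]. exists d; split; auto.
  intros y hy. apply Hd; auto; [apply Rmax_l| |].
  - rewrite Rminus_diag, Rabs_R0; auto.
  - eapply Rle_lt_trans; [apply Rmax0_lipschitz|]; auto.
Qed.

Lemma Rint_ext0 g a b : 0 <= a <= b -> continuity (ext0 g) -> Rint g a b = Rint (ext0 g) a b.
Proof.
  intros hab C. symmetry. apply Rint_ext; [lra|intros x _; auto|].
  intros x hx. unfold ext0. rewrite Rmax_right; lra.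
Qed.

Lemma rpow_nonneg x a : 0 <= rpow x a.
Proof. unfold rpow; destruct Rlt_dec; [unfold Rpower; left; apply exp_pos|lra]. Qed.

Lemma rpow_pos x a : 0 < x -> 0 < rpow x a.
Proof. intros h; unfold rpow; destruct Rlt_dec; [unfold Rpower; apply exp_pos|lra]. Qed.

Lemma Rpower_lt_base x y a : 0 < a -> 0 < x -> x < y -> Rpower x a < Rpower y a.
Proof.
  intros ha hx hxy. unfold Rpower. apply exp_increasing.
  apply Rmult_lt_compat_l; auto. apply ln_increasing; auto.
Qed.

Lemma rpow_le x y a : 0 < a -> 0 <= x -> x <= y -> rpow x a <= rpow y a.
Proof.
  intros ha hx hxy. unfold rpow.
  destruct (Rlt_dec 0 x), (Rlt_dec 0 y); try lra.
  - destruct hxy as [h|h]; [left; apply Rpower_lt_base; auto|subst; lra].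
  - left; unfold Rpower; apply exp_pos.
Qed.

Lemma rpow_inv x n : 0 < n -> 0 <= x -> rpow (rpow x n) (1 / n) = x.
Proof.
  intros hn hx. unfold rpow at 2.
  destruct (Rlt_dec 0 x).
  - unfold rpow. destruct Rlt_dec.
    + rewrite Rpower_mult. replace (n * (1 / n)) with 1 by (field; lra). apply Rpower_1; auto.
    + exfalso; apply n0; unfold Rpower; apply exp_pos.
  - unfold rpow; destruct Rlt_dec; lra.
Qed.

Lemma rpow_continuity a : 0 < a -> continuity (fun y => rpow y a).
Proof.
  intros ha x. destruct (Rtotal_order x 0) as [hx|[hx|hx]].
  - apply continuity_pt_locally_ext with (f := fct_cte 0) (a := - x); [lra| |].
    + intros y hy. unfold Rdist in hy. apply Rabs_def2 in hy.
      unfold rpow, fct_cte; destruct Rlt_dec; lra.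
    + apply continuity_pt_const. intros ? ?; reflexivity.
  - subst. apply continuity_pt_of_eps. intros eps he.
    exists (Rpower eps (1 / a)). split; [unfold Rpower; apply exp_pos|].
    intros y hy. unfold rpow at 2. destruct (Rlt_dec 0 0); [lra|].
    rewrite Rminus_0_r in *. unfold rpow. destruct Rlt_dec.
    + rewrite Rabs_right by (left; unfold Rpower; apply exp_pos).
      rewrite Rabs_right in hy by lra.
      replace eps with (Rpower (Rpower eps (1 / a)) a).
      * apply Rpower_lt_base; auto.
      * rewrite Rpower_mult. replace (1 / a * a) with 1 by (field; lra). apply Rpower_1; auto.
    + rewrite Rabs_R0; auto.
  - apply continuity_pt_locally_ext with (f := fun y => Rpower y a) (a := x); [lra| |].
    + intros y hy. unfold Rdist in hy. apply Rabs_def2 in hy.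
      unfold rpow; destruct Rlt_dec; lra.
    + apply derivable_continuous_pt. exists (a * Rpower x (a - 1)).
      apply derivable_pt_lim_power; lra.
Qed.

(* ** The function G and its inverse *)

Lemma ln_pos_succ x : 0 < x -> 0 < ln (x + 1).
Proof. intros; rewrite <- ln_1; apply ln_increasing; lra. Qed.

Lemma ln_le a b : 0 < a -> a <= b -> ln a <= ln b.
Proof. intros h [hl|he]; [left; apply ln_increasing; auto|subst; lra]. Qed.

(* Closed form of G(x) = int_{x0}^x ds / ((s+1) ln(s+1)), for x > 0. *)
Definition ell (x0 x : R) : R := ln (ln (x + 1)) - ln (ln (x0 + 1)).

Lemma ell_deriv x0 s : 0 < s -> derivable_pt_lim (ell x0) s (1 / ((s + 1) * ln (s + 1))).
Proof.
  intros hs. pose proof (ln_pos_succ _ hs). unfold ell.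
  replace (1 / ((s + 1) * ln (s + 1))) with (/ ln (s + 1) * (/ (s + 1) * (1 + 0)) - 0)
    by (field; lra).
  apply (derivable_pt_lim_minus (fun x => ln (ln (x + 1))) (fct_cte (ln (ln (x0 + 1))))).
  - apply (derivable_pt_lim_comp (fun x => ln (x + 1)) ln).
    + apply (derivable_pt_lim_comp (fun x => x + 1) ln).
      * apply (derivable_pt_lim_plus id (fct_cte 1)).
        -- apply derivable_pt_lim_id.
        -- apply derivable_pt_lim_const.
      * apply derivable_pt_lim_ln; lra.
    + apply derivable_pt_lim_ln; auto.
  - apply derivable_pt_lim_const.
Qed.

Lemma ell_pos x0 x : 0 < x0 -> x0 < x -> 0 < ell x0 x.
Proof.
  intros h hx. pose proof (ln_pos_succ x0 h). unfold ell.
  assert (ln (ln (x0 + 1)) < ln (ln (x + 1))); [|lra].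
  apply ln_increasing; auto. apply ln_increasing; lra.
Qed.

Lemma G_ell x0 c : 0 < x0 -> x0 <= c -> G x0 c = ell x0 c.
Proof.
  intros h hc. unfold G.
  rewrite (Rint_FTC _ (ell x0)); auto.
  - unfold ell at 2. ring.
  - intros x hx. pose proof (ln_pos_succ x ltac:(lra)).
    assert (Csucc : continuity_pt (fun s => s + 1) x).
    { apply (continuity_pt_plus id (fct_cte 1)); [apply derivable_continuous_pt, derivable_pt_id|].
      apply continuity_pt_const; intros ? ?; reflexivity. }
    assert (Cln : continuity_pt ln (x + 1)).
    { apply derivable_continuous_pt. exists (/ (x + 1)). apply derivable_pt_lim_ln; lra. }
    change (continuity_pt (fct_cte 1 / (fun s => (s + 1) * ln (s + 1))) x).
    apply continuity_pt_div.
    + apply continuity_pt_const; intros ? ?; reflexivity.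
    + apply (continuity_pt_mult (fun s => s + 1) (comp ln (fun s => s + 1))); auto.
      apply continuity_pt_comp; auto.
    + apply Rgt_not_eq, Rmult_lt_0_compat; lra.
  - intros x hx. apply ell_deriv. lra.
Qed.

Lemma Ginv_ell x0 x : 0 < x0 -> 0 < x -> Ginv x0 (ell x0 x) = x.
Proof.
  intros h0 h. pose proof (ln_pos_succ _ h0). pose proof (ln_pos_succ _ h).
  assert (E : exp (ell x0 x) = ln (x + 1) / ln (x0 + 1)).
  { unfold ell, Rminus. rewrite exp_plus, exp_Ropp, !exp_ln by auto; reflexivity. }
  unfold Ginv. rewrite E.
  replace (ln (x + 1) / ln (x0 + 1) * ln (x0 + 1)) with (ln (x + 1)) by (field; lra).
  rewrite exp_ln by lra. ring.
Qed.

Lemma Ginv_pos x0 s : 0 < x0 -> 0 < Ginv x0 s.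
Proof.
  intros h. unfold Ginv. pose proof (ln_pos_succ _ h). pose proof (exp_pos s).
  assert (hp : 0 < exp s * ln (x0 + 1)) by (apply Rmult_lt_0_compat; auto).
  pose proof (exp_increasing _ _ hp) as he. rewrite exp_0 in he. lra.
Qed.

Lemma Ginv_le x0 y1 y2 : 0 < x0 -> y1 <= y2 -> Ginv x0 y1 <= Ginv x0 y2.
Proof.
  intros h [hl|he]; [|subst; lra].
  unfold Ginv. pose proof (ln_pos_succ _ h).
  assert (exp (exp y1 * ln (x0 + 1)) < exp (exp y2 * ln (x0 + 1))); [|lra].
  apply exp_increasing, Rmult_lt_compat_r; auto. apply exp_increasing; auto.
Qed.

Lemma Ginv_continuity x0 : continuity (Ginv x0).
Proof.
  intros s. apply derivable_continuous_pt.
  exists (exp (exp s * ln (x0 + 1)) * (exp s * ln (x0 + 1)) - 0).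
  apply (derivable_pt_lim_minus (fun s => exp (exp s * ln (x0 + 1))) (fct_cte 1)).
  - apply (derivable_pt_lim_comp (fun s => exp s * ln (x0 + 1)) exp).
    + apply derivable_pt_lim_scal_right, derivable_pt_lim_exp.
    + apply derivable_pt_lim_exp.
  - apply derivable_pt_lim_const.
Qed.

(* ** The function Psi *)

Definition psi (x0 n : R) (w : R -> R) (s : R) : R := 1 / w (rpow (Ginv x0 s) (1 / n)).

Section Psi.
Variables (x0 n : R) (w : R -> R).
Hypotheses (Hx0 : 0 < x0) (Hn : 0 < n) (Hw_cont : cont_nonneg w)
  (Hw_pos : forall x, 0 < x -> 0 < w x).

Lemma psi_pos s : 0 < psi x0 n w s.
Proof.
  unfold psi. apply Rdiv_lt_0_compat; [lra|]. apply Hw_pos, rpow_pos, Ginv_pos; auto.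
Qed.

Lemma psi_continuity : continuity (psi x0 n w).
Proof.
  intros s.
  apply continuity_pt_locally_ext with
    (f := div_fct (fct_cte 1) (comp (ext0 w) (comp (fun y => rpow y (1 / n)) (Ginv x0)))) (a := 1);
    [lra| |].
  - intros y _. unfold psi, div_fct, comp, fct_cte, ext0.
    rewrite Rmax_right; auto. apply rpow_nonneg.
  - apply continuity_pt_div.
    + apply continuity_pt_const. intros ? ?; reflexivity.
    + apply continuity_pt_comp; [|apply ext0_continuity; auto].
      apply continuity_pt_comp; [apply Ginv_continuity|].
      apply rpow_continuity, Rdiv_lt_0_compat; lra.
    + unfold comp, ext0. rewrite Rmax_right by apply rpow_nonneg.
      apply Rgt_not_eq, Hw_pos, rpow_pos, Ginv_pos; auto.
Qed.

Lemma Psi_deriv y : derivable_pt_lim (Psi x0 n w) y (psi x0 n w y).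
Proof. apply Rint_deriv, psi_continuity. Qed.

Lemma Psi_continuity : continuity (Psi x0 n w).
Proof. intros y. apply derivable_continuous_pt. eexists; apply Psi_deriv. Qed.

Lemma Psi_lt x y : x < y -> Psi x0 n w x < Psi x0 n w y.
Proof.
  intros hxy.
  destruct (MVT_cor2 (Psi x0 n w) (psi x0 n w) x y hxy) as [z [Hz _]].
  - intros; apply Psi_deriv.
  - pose proof (psi_pos z).
    assert (0 < psi x0 n w z * (y - x)) by (apply Rmult_lt_0_compat; lra). lra.
Qed.

Lemma Psi_le_inv x y : Psi x0 n w x <= Psi x0 n w y -> x <= y.
Proof.
  intros H. destruct (Rle_or_lt x y) as [h|h]; auto.
  pose proof (Psi_lt y x h). lra.
Qed.

Lemma in_Dom_Psi_inv_between a b y : 0 < a -> a <= b ->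
  Psi x0 n w a <= y <= Psi x0 n w b -> in_Dom_Psi_inv x0 n w y.
Proof.
  intros ha hab hy.
  destruct (IVT_cor (fun x => Psi x0 n w x - y) a b) as [z [hz Ez]]; auto.
  - apply continuity_minus; [apply Psi_continuity|apply continuity_const; intros ? ?; auto].
  - assert (0 <= (y - Psi x0 n w a) * (Psi x0 n w b - y)) by (apply Rmult_le_pos; lra).
    lra.
  - exists z. split; lra.
Qed.

Lemma Psi_inv_spec y : in_Dom_Psi_inv x0 n w y -> Psi x0 n w (Psi_inv x0 n w y) = y.
Proof.
  intros D. unfold Psi_inv.
  destruct (epsilon_spec (inhabits 0) (fun x => 0 < x /\ Psi x0 n w x = y) D); auto.
Qed.

End Psi.

(* ** Bihari's comparison lemma *)

(* If Omega' = 1/H and the nonnegative k satisfies k <= g H(v) for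
   v(s) = c + int_0^s k, then Omega(v A) <= Omega(c) + int_0^A g: the map
   r |-> Omega(v r) - int_0^r g has nonpositive derivative. *)
Lemma bihari_comparison (Omega H k g : R -> R) (c A : R) :
  0 < c -> 0 <= A ->
  (forall x, 0 < x -> 0 < H x) ->
  (forall x, 0 < x -> derivable_pt_lim Omega x (/ H x)) ->
  cont_on k 0 A -> cont_on g 0 A ->
  (forall s, 0 <= s <= A -> 0 <= k s) ->
  (forall s, 0 <= s <= A -> k s <= g s * H (c + Rint k 0 s)) ->
  Omega (c + Rint k 0 A) <= Omega c + Rint g 0 A.
Proof.
  intros hc hA H_pos Omega_deriv Ck Cg k_nonneg k_le.
  destruct (Rint_primitive k 0 A hA Ck) as [Pk [DPk EPk]].
  destruct (Rint_primitive g 0 A hA Cg) as [Pg [DPg EPg]].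
  assert (v_pos : forall s, 0 <= s <= A -> 0 < c + Pk s).
  { intros s hs. rewrite EPk by lra.
    assert (0 <= Rint k 0 s); [|lra].
    apply Rint_nonneg; [lra| |]; intros x hx; [apply Ck|apply k_nonneg]; lra. }
  destruct hA as [hA|<-]; [|rewrite !Rint_same, !Rplus_0_r; lra].
  rewrite <- !EPk, <- EPg by lra.
  destruct (MVT_cor2 (fun r => Omega (c + Pk r) - Pg r)
    (fun r => / H (c + Pk r) * (0 + k r) - g r) 0 A hA) as [xi [Hxi hxi]].
  - intros r hr.
    apply (derivable_pt_lim_minus (fun r => Omega (c + Pk r)) Pg); [|apply DPg; auto].
    apply (derivable_pt_lim_comp (fun r => c + Pk r) Omega).
    + apply (derivable_pt_lim_plus (fct_cte c) Pk); [apply derivable_pt_lim_const|auto].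
    + apply Omega_deriv, v_pos; auto.
  - assert (hxi' : 0 <= xi <= A) by lra.
    assert (hH : 0 < H (c + Pk xi)) by (apply H_pos, v_pos; auto).
    assert (slope : / H (c + Pk xi) * (0 + k xi) - g xi <= 0).
    { assert (/ H (c + Pk xi) * k xi <= / H (c + Pk xi) * (g xi * H (c + Pk xi))).
      { apply Rmult_le_compat_l; [left; apply Rinv_0_lt_compat; auto|].
        rewrite EPk by lra. apply k_le; auto. }
      replace (/ H (c + Pk xi) * (g xi * H (c + Pk xi))) with (g xi) in * by (field; lra).
      lra. }
    assert ((/ H (c + Pk xi) * (0 + k xi) - g xi) * (A - 0) <= 0 * (A - 0))
      by (apply Rmult_le_compat_r; lra).
    rewrite (EPk 0), (EPg 0), !Rint_same, Rplus_0_r in Hxi by lra. lra.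
Qed.

(* H(x) = (x+1) ln(x+1) w(x^{1/n}); the kernel of the inequality is f(t,s) H(u(s)^n). *)
Definition H (n : R) (w : R -> R) (x : R) : R := (x + 1) * ln (x + 1) * w (rpow x (1 / n)).

Section Comparison_function.
Variables (x0 n : R) (w : R -> R).
Hypotheses (Hx0 : 0 < x0) (Hn : 0 < n) (Hw_cont : cont_nonneg w)
  (Hw_nonneg : forall x, 0 <= x -> 0 <= w x) (Hw_mono : nondecr_nonneg w)
  (Hw_pos : forall x, 0 < x -> 0 < w x).

Lemma H_pos x : 0 < x -> 0 < H n w x.
Proof.
  intros hx. pose proof (ln_pos_succ x hx). unfold H.
  apply Rmult_lt_0_compat; [apply Rmult_lt_0_compat; lra|].
  apply Hw_pos, rpow_pos; auto.
Qed.

Lemma H_le x y : 0 <= x -> x <= y -> H n w x <= H n w y.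
Proof.
  intros hx hxy. unfold H.
  assert (l0 : 0 <= ln (x + 1)) by (rewrite <- ln_1; apply ln_le; lra).
  assert (l1 : ln (x + 1) <= ln (y + 1)) by (apply ln_le; lra).
  apply Rmult_le_compat; [apply Rmult_le_pos; lra|apply Hw_nonneg, rpow_nonneg| |].
  - apply Rmult_le_compat; lra.
  - apply Hw_mono; [apply rpow_nonneg|]. apply rpow_le; auto.
    apply Rdiv_lt_0_compat; lra.
Qed.

Lemma H_continuity x : 0 <= x -> continuity_pt (H n w) x.
Proof.
  intros hx.
  assert (Csucc : continuity (fun s => s + 1)).
  { intros s. apply (continuity_pt_plus id (fct_cte 1)); [apply derivable_continuous_pt, derivable_pt_id|].
    apply continuity_pt_const; intros ? ?; reflexivity. }
  apply continuity_pt_locally_ext with (a := 1) (f := mult_fct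
    (mult_fct (fun s => s + 1) (comp ln (fun s => s + 1)))
    (comp (ext0 w) (fun s => rpow s (1 / n)))); [lra| |].
  - intros y _. unfold H, mult_fct, comp, ext0. rewrite Rmax_right; auto. apply rpow_nonneg.
  - apply continuity_pt_mult; [apply continuity_pt_mult; auto|].
    + apply continuity_pt_comp; auto.
      apply derivable_continuous_pt. exists (/ (x + 1)). apply derivable_pt_lim_ln; lra.
    + apply continuity_pt_comp; [|apply ext0_continuity; auto].
      apply rpow_continuity, Rdiv_lt_0_compat; lra.
Qed.

Lemma Psi_ell_deriv x : 0 < x ->
  derivable_pt_lim (fun y => Psi x0 n w (ell x0 y)) x (/ H n w x).
Proof.
  intros hx. pose proof (H_pos x hx). pose proof (ln_pos_succ x hx).
  assert (hw : 0 < w (rpow x (1 / n))) by (apply Hw_pos, rpow_pos; auto).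
  replace (/ H n w x) with (psi x0 n w (ell x0 x) * (1 / ((x + 1) * ln (x + 1)))).
  - apply (derivable_pt_lim_comp (ell x0) (Psi x0 n w)); [apply ell_deriv; auto|].
    apply Psi_deriv; auto.
  - unfold psi, H. rewrite Ginv_ell by auto. field. repeat split; lra.
Qed.

End Comparison_function.

(* ** The estimate under the hypotheses of the corollary *)

Section Inequality.
Variables (n c x0 : R) (f : R -> R -> R) (w alpha u : R -> R).
Hypotheses (Hn : 0 < n) (Hc : 0 < c) (Hx0 : 0 < x0) (Hx0c : x0 < c)
  (Hf_cont : cont2_nonneg f)
  (Hf_nonneg : forall t s, 0 <= t -> 0 <= s -> 0 <= f t s)
  (Hf_mono : forall s t1 t2, 0 <= s -> 0 <= t1 -> t1 <= t2 -> f t1 s <= f t2 s)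
  (Hw_cont : cont_nonneg w)
  (Hw_nonneg : forall x, 0 <= x -> 0 <= w x)
  (Hw_mono : nondecr_nonneg w)
  (Hw_pos : forall x, 0 < x -> 0 < w x)
  (Ha_nonneg : forall t, 0 <= t -> 0 <= alpha t)
  (Ha_le : forall t, 0 <= t -> alpha t <= t)
  (Hu_cont : cont_nonneg u)
  (Hu_nonneg : forall t, 0 <= t -> 0 <= u t)
  (Hineq : forall t, 0 <= t ->
     rpow (u t) n <= c + Rint (fun s => f t s * (rpow (u s) n + 1)
                                  * ln (rpow (u s) n + 1) * w (u s)) 0 (alpha t)).

Definition kernel (t s : R) : R := f t s * H n w (rpow (u s) n).

Lemma kernel_continuity t : 0 <= t -> continuity (ext0 (kernel t)).
Proof.
  intros ht x.
  change (continuity_pt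
    (mult_fct (ext0 (f t)) (comp (H n w) (comp (fun y => rpow y n) (ext0 u)))) x).
  apply continuity_pt_mult; [apply ext0_continuity2; auto|].
  apply continuity_pt_comp; [|apply H_continuity, rpow_nonneg; auto].
  apply continuity_pt_comp; [apply ext0_continuity; auto|apply rpow_continuity; auto].
Qed.

Lemma kernel_le t1 t2 s : 0 <= s -> 0 <= t1 -> t1 <= t2 -> kernel t1 s <= kernel t2 s.
Proof.
  intros hs ht1 ht12. unfold kernel.
  apply Rmult_le_compat_r; [|apply Hf_mono; auto].
  replace 0 with (H n w 0) by (unfold H; rewrite Rplus_0_l, ln_1; ring).
  apply H_le, rpow_nonneg; auto; lra.
Qed.

Lemma kernel_nonneg t s : 0 <= t -> 0 <= s -> 0 <= kernel t s.
Proof.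
  intros ht hs. unfold kernel.
  apply Rmult_le_pos; [apply Hf_nonneg; auto|].
  replace 0 with (H n w 0) by (unfold H; rewrite Rplus_0_l, ln_1; ring).
  apply H_le, rpow_nonneg; auto; lra.
Qed.

Lemma Rint_kernel t b : 0 <= t -> 0 <= b ->
  Rint (fun s => f t s * (rpow (u s) n + 1) * ln (rpow (u s) n + 1) * w (u s)) 0 b
  = Rint (ext0 (kernel t)) 0 b.
Proof.
  intros ht hb. symmetry. apply Rint_ext; [lra|intros x _; apply kernel_continuity; auto|].
  intros x hx. unfold ext0, kernel, H.
  rewrite Rmax_right, rpow_inv by (try apply Hu_nonneg; auto; lra). ring.
Qed.

(* Since f increases in time and alpha(s) <= s, the bound at an earlier time s
   also holds with the kernel of a later time t. *)
Lemma power_le_kernel_integral s t : 0 <= s <= t ->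
  rpow (u s) n <= c + Rint (ext0 (kernel t)) 0 (alpha s).
Proof.
  intros hst. pose proof (Ha_nonneg s ltac:(lra)).
  pose proof (Hineq s ltac:(lra)) as Hs. rewrite Rint_kernel in Hs by lra.
  assert (Rint (ext0 (kernel s)) 0 (alpha s) <= Rint (ext0 (kernel t)) 0 (alpha s)); [|lra].
  apply Rint_le; auto; intros x _; [apply kernel_continuity; lra|apply kernel_continuity; lra|].
  apply kernel_le; [apply Rmax_l|lra|lra].
Qed.

Lemma bound_at_time T y : 0 <= T ->
  Psi x0 n w (G x0 c) + Rint (fun s => f T s) 0 (alpha T) <= Psi x0 n w y ->
  u T <= rpow (Ginv x0 y) (1 / n).
Proof.
  intros hT Hy.
  set (A := alpha T). assert (hA : 0 <= A <= T) by (split; apply Ha_nonneg || apply Ha_le; auto).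
  set (k := ext0 (kernel T)).
  assert (Ck : continuity k) by (apply kernel_continuity; auto).
  assert (k_nonneg : forall s, 0 <= k s) by (intros; apply kernel_nonneg; [lra|apply Rmax_l]).
  assert (Rint_k_nonneg : forall a b, a <= b -> 0 <= Rint k a b)
    by (intros; apply Rint_nonneg; auto; intros x _; auto).
  set (Z := c + Rint k 0 A).
  assert (hZ : 0 < Z) by (unfold Z; pose proof (Rint_k_nonneg 0 A ltac:(lra)); lra).
  assert (v_dominates : forall s, 0 <= s <= A -> rpow (u s) n <= c + Rint k 0 s).
  { intros s hs. pose proof (power_le_kernel_integral s T ltac:(lra)) as Hs. fold k in Hs.
    assert (has : 0 <= alpha s <= s) by (split; apply Ha_nonneg || apply Ha_le; lra).
    rewrite (Rint_chasles k 0 (alpha s) s Ck).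
    pose proof (Rint_k_nonneg (alpha s) s ltac:(lra)). lra. }
  assert (bihari : Psi x0 n w (ell x0 Z) <= Psi x0 n w (ell x0 c) + Rint (ext0 (f T)) 0 A).
  { apply (bihari_comparison (fun y => Psi x0 n w (ell x0 y)) (H n w) k (ext0 (f T)) c A);
      auto; try lra.
    - intros; apply H_pos; auto.
    - intros; apply Psi_ell_deriv; auto.
    - intros x _; auto.
    - intros x _; apply ext0_continuity2; auto.
    - intros s hs. unfold k, ext0, kernel. rewrite Rmax_right by lra.
      apply Rmult_le_compat_l; [apply Hf_nonneg; lra|].
      apply H_le; auto. apply rpow_nonneg. }
  rewrite G_ell in Hy by lra. fold A in Hy.
  rewrite Rint_ext0 in Hy by (lra || apply ext0_continuity2; auto).
  assert (Z_le : Z <= Ginv x0 y).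
  { rewrite <- (Ginv_ell x0 Z) by auto. apply Ginv_le; auto.
    apply (Psi_le_inv x0 n w); auto. eapply Rle_trans; [exact bihari|exact Hy]. }
  rewrite <- (rpow_inv (u T) n) by auto.
  apply rpow_le; [apply Rdiv_lt_0_compat; lra|apply rpow_nonneg|].
  pose proof (power_le_kernel_integral T T ltac:(lra)) as HT. fold A k Z in HT. lra.
Qed.

Lemma small_time_integral D : 0 < D -> exists tau, 0 < tau /\
  forall T, 0 <= T <= tau -> 0 <= Rint (fun s => f T s) 0 (alpha T) < D.
Proof.
  intros hD.
  set (Q := fun r => Rint (ext0 (f 1)) 0 r).
  assert (CQ : continuity_pt Q 0).
  { apply derivable_continuous_pt. eexists.
    apply Rint_deriv, ext0_continuity2; auto; lra. }
  destruct (eps_of_continuity_pt Q 0 CQ D hD) as [d [hd Hd]].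
  exists (Rmin 1 (d / 2)). split; [apply Rmin_pos; lra|].
  intros T hT. pose proof (Rmin_l 1 (d / 2)); pose proof (Rmin_r 1 (d / 2)).
  assert (hA : 0 <= alpha T <= T) by (split; apply Ha_nonneg || apply Ha_le; lra).
  rewrite Rint_ext0 by (lra || apply ext0_continuity2; auto; lra).
  split.
  - apply Rint_nonneg; [lra|intros x _; apply ext0_continuity2; auto; lra|].
    intros x _. apply Hf_nonneg; [lra|apply Rmax_l].
  - apply Rle_lt_trans with (Q (alpha T)).
    + apply Rint_le; [lra|intros x _; apply ext0_continuity2; auto; lra..|].
      intros x _. apply Hf_mono; [apply Rmax_l|lra|lra].
    + assert (Q0 : Q 0 = 0) by apply Rint_same.
      assert (Rabs (alpha T - 0) < d) by (rewrite Rminus_0_r, Rabs_right; lra).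
      specialize (Hd (alpha T) ltac:(auto)). rewrite Q0, Rminus_0_r in Hd.
      apply Rabs_def2 in Hd. lra.
Qed.

End Inequality.

Theorem corollary2
  (n c x0 : R) (f : R -> R -> R) (w alpha u : R -> R)
  (Hn : 0 < n) (Hc : 0 < c) (Hx0 : 0 < x0) (Hx0c : x0 < c)
  (Hf_cont : cont2_nonneg f)
  (Hf_nonneg : forall t s, 0 <= t -> 0 <= s -> 0 <= f t s)
  (Hf_mono : forall s t1 t2, 0 <= s -> 0 <= t1 -> t1 <= t2 -> f t1 s <= f t2 s)
  (Hw_cont : cont_nonneg w)
  (Hw_nonneg : forall x, 0 <= x -> 0 <= w x)
  (Hw_mono : nondecr_nonneg w)
  (Hw_pos : forall x, 0 < x -> 0 < w x)
  (Ha_C1 : C1_nonneg alpha)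
  (Ha_nonneg : forall t, 0 <= t -> 0 <= alpha t)
  (Ha_mono : nondecr_nonneg alpha)
  (Ha_le : forall t, 0 <= t -> alpha t <= t)
  (Hu_cont : cont_nonneg u)
  (Hu_nonneg : forall t, 0 <= t -> 0 <= u t)
  (Hineq : forall t, 0 <= t ->
     rpow (u t) n <= c + Rint (fun s => f t s * (rpow (u s) n + 1)
                                  * ln (rpow (u s) n + 1) * w (u s)) 0 (alpha t)) :
  exists tau, 0 < tau /\
    forall t, 0 <= t -> t <= tau ->
      in_Dom_Psi_inv x0 n w (Psi x0 n w (G x0 c) + Rint (fun s => f t s) 0 (alpha t)) /\
      u t <= rpow (Ginv x0 (Psi_inv x0 n w
                    (Psi x0 n w (G x0 c) + Rint (fun s => f t s) 0 (alpha t)))) (1 / n).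
Proof.
  assert (hGc : 0 < G x0 c) by (rewrite G_ell by lra; apply ell_pos; auto).
  set (D := Psi x0 n w (G x0 c + 1) - Psi x0 n w (G x0 c)).
  assert (hD : 0 < D) by (pose proof (Psi_lt x0 n w Hx0 Hn Hw_cont Hw_pos (G x0 c) (G x0 c + 1)); unfold D; lra).
  destruct (small_time_integral f alpha Hf_cont Hf_nonneg Hf_mono Ha_nonneg Ha_le D hD)
    as [tau [htau Htau]].
  exists tau. split; [exact htau|]. intros t ht htau_t.
  destruct (Htau t (conj ht htau_t)) as [F_nonneg F_lt].
  (* the argument of Psi^{-1} lies between Psi(G c) and Psi(G c + 1) *)
  assert (Dom : in_Dom_Psi_inv x0 n w
                  (Psi x0 n w (G x0 c) + Rint (fun s => f t s) 0 (alpha t))).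
  { apply (in_Dom_Psi_inv_between x0 n w Hx0 Hn Hw_cont Hw_pos (G x0 c) (G x0 c + 1));
      unfold D in F_lt; lra. }
  split; [exact Dom|].
  apply (bound_at_time n c x0 f w alpha u Hn Hc Hx0 Hx0c Hf_cont Hf_nonneg Hf_mono
    Hw_cont Hw_nonneg Hw_mono Hw_pos Ha_nonneg Ha_le Hu_cont Hu_nonneg Hineq t); auto.
  rewrite Psi_inv_spec by exact Dom. lra.
Qed.
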